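(* For every $k\ge1$ and every partition $\tau$ of size $k$ that avoids $122$, the pair $\{122,\tau\}$ is Wilf-equivalent to the pair $\{112,12\cdots k\}$; that is, $p_n(122,\tau)=p_n(112,12\cdots k)$ for all $n\ge0$.
   Context: Set partitions of $[n]$ are represented by canonical sequential forms (restricted growth words $\pi_1\cdots\pi_n$ with $\pi_1=1$ and $\pi_{i+1}\le \max(\pi_1,\dots,\pi_i)+1$; $\pi_j$ is the index of the block of $j$, blocks ordered by minima). $\pi$ contains a pattern $\tau$ if some subsequence of $\pi$ is order-isomorphic to $\tau$, otherwise avoids it. $p_n(T)$ is the number of partitions of $[n]$ avoiding every pattern of $T$. The size of a partition is its length. *)

From mathcomp Require Import all_boot.
Set Implicit Arguments. Unset Strict Implicit. Unset Printing Implicit Defensive.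

(* Set partitions of [n] as canonical sequential forms (restricted growth words),
   1-based: pi_1 = 1 and pi_{i+1} <= max(pi_1..pi_i) + 1.  The empty word is the
   unique partition of the empty set. *)
Fixpoint rgf_from (m : nat) (s : seq nat) : bool :=
  match s with
  | [::] => true
  | a :: s' => [&& 0 < a, a <= m.+1 & rgf_from (maxn m a) s']
  end.

(* pi_1 = 1 is forced by rgf_from 0: 0 < a <= 1. *)
Definition is_rgf (s : seq nat) : bool := rgf_from 0 s.

Definition order_iso (u v : seq nat) : bool :=
  (size u == size v) &&
  [forall i : 'I_(size u), forall j : 'I_(size u),
     ((nth 0 u i < nth 0 u j) == (nth 0 v i < nth 0 v j)) &&
     ((nth 0 u i == nth 0 u j) == (nth 0 v i == nth 0 v j))].

Definition contains (s t : seq nat) : bool :=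
  [exists m : (size s).-tuple bool, order_iso (mask m s) t].

Definition avoids (s t : seq nat) : bool := ~~ contains s t.

(* The partition of [n] encoded by a word w of length n over {0..n-1}, shifted by 1 *)
Definition word_of (n : nat) (w : n.-tuple 'I_n) : seq nat := [seq (val i).+1 | i <- w].

(* p_n(T): number of partitions of [n] avoiding every pattern in T.
   (Every RGF of length n has entries in {1..n}, so all are enumerated.) *)
Definition p_n (n : nat) (T : seq (seq nat)) : nat :=
  #|[set w : n.-tuple 'I_n | is_rgf (word_of w) && all (avoids (word_of w)) T]|.

Definition incr_pat (k : nat) : seq nat := iota 1 k.

From mathcomp Require Import all_boot zify.
Set Implicit Arguments. Unset Strict Implicit. Unset Printing Implicit Defensive.

(* Both sides count the same binary words.  For n = 0 both equal 1; for a
   partition of [n+1] we code it by a binary word b of size n.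
   - A partition avoids 122 iff it is [rgf122 b]: after the initial 1, each
     letter is either 1 (false in b) or a new maximum (true in b).  So the
     122-avoiding tau of size k is [rgf122 c] with size c = k - 1, and
     [rgf122 b] contains [rgf122 c] iff c is a subsequence of b.
   - A partition avoids 112 iff it is [rgf112 b] = 12...M followed by a
     nonincreasing word with letters in [1, M], where M - 1 is the number of
     trues of b and the nonincreasing word is read off b as a staircase.
     [rgf112 b] contains 12...k iff b has at least k - 1 trues, i.e. iff the
     all-true word of size k - 1 is a subsequence of b.
   - The number of binary words of size n avoiding a word t as a subsequence
     only depends on the size of t. *)

Lemma order_isoP u v : reflect (size u = size v /\ forall i j, i < size u -> j < size u ->
   ((nth 0 u i < nth 0 u j) = (nth 0 v i < nth 0 v j)) /\
   ((nth 0 u i == nth 0 u j) = (nth 0 v i == nth 0 v j))) (order_iso u v).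
Proof.
apply: (iffP andP) => [[/eqP hs /forallP H]|[hs H]]; split => //.
- move=> i j hi hj; have /forallP /(_ (Ordinal hj)) /andP [/eqP a /eqP b] := H (Ordinal hi).
  by split.
- by rewrite hs.
- apply/forallP => i; apply/forallP => j.
  by case: (H i j (ltn_ord i) (ltn_ord j)) => -> ->; rewrite !eqxx.
Qed.

Lemma containsP s t : reflect (exists2 u, subseq u s & order_iso u t) (contains s t).
Proof.
apply: (iffP existsP) => [[m h]|[u /subseqP [m sm ->] h]].
  by exists (mask m s) => //; apply: mask_subseq.
by exists (Tuple (introT eqP sm)).
Qed.

Lemma order_iso_size u v : order_iso u v -> size u = size v.
Proof. by case/order_isoP. Qed.

Lemma order_iso_refl u : order_iso u u.
Proof. by apply/order_isoP; split. Qed.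

Lemma order_iso_uniq u v : order_iso u v -> uniq v -> uniq u.
Proof.
case/order_isoP => hs H /(uniqP 0) U; apply/(uniqP 0) => i j hi hj e.
have [_ b] := H i j hi hj; apply: U; rewrite ?inE -?hs //.
by apply/eqP; rewrite -b e.
Qed.

Lemma order_iso_level u v i : order_iso u v -> i < size u ->
  map (fun x => x != nth 0 u i) u = map (fun x => x != nth 0 v i) v.
Proof.
case/order_isoP => hs H hi; apply: (@eq_from_nth _ true); rewrite !size_map //.
move=> j hj; rewrite !(nth_map 0) -?hs //.
by have [_ e] := H j i hj hi; rewrite e.
Qed.

Lemma contains_subseq s s' t : subseq s s' -> contains s t -> contains s' t.
Proof.
move=> ss /containsP [u su h]; apply/containsP; exists u => //.
exact: subseq_trans su ss.
Qed.

Lemma avoids_rcons s a t : avoids (rcons s a) t -> avoids s t.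
Proof. by apply: contra; apply: contains_subseq; apply: subseq_rcons. Qed.

Lemma avoids_nil t : 0 < size t -> avoids [::] t.
Proof.
move=> st; apply/negP => /containsP [u]; rewrite subseq0 => /eqP -> /order_iso_size /= h.
by rewrite -h in st.
Qed.

Lemma order_iso_112 u : order_iso u [:: 1; 1; 2] <-> exists x y, u = [:: x; x; y] /\ x < y.
Proof.
split=> [h|[x [y [-> xy]]]].
  have := order_iso_size h; case/order_isoP: h => _ H.
  case: u H => [|a [|b [|c [|]]]] //= H _.
  have [_ e] := H 0 1 isT isT; have [l _] := H 1 2 isT isT.
  by move: e l => /= /eqP -> l; exists b, c; rewrite l.
apply/order_isoP; split => // i j.
by case: i j => [|[|[|i]]] [|[|[|j]]] //= _ _;
  rewrite ?ltnn ?eqxx ?xy ?(ltn_eqF xy) ?(gtn_eqF xy) ?(leq_gtF (ltnW xy)).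
Qed.

Lemma order_iso_122 u : order_iso u [:: 1; 2; 2] <-> exists x y, u = [:: x; y; y] /\ x < y.
Proof.
split=> [h|[x [y [-> xy]]]].
  have := order_iso_size h; case/order_isoP: h => _ H.
  case: u H => [|a [|b [|c [|]]]] //= H _.
  have [l _] := H 0 1 isT isT; have [_ e] := H 1 2 isT isT.
  by move: e l => /= /eqP -> l; exists a, c; rewrite l.
apply/order_isoP; split => // i j.
by case: i j => [|[|[|i]]] [|[|[|j]]] //= _ _;
  rewrite ?ltnn ?eqxx ?xy ?(ltn_eqF xy) ?(gtn_eqF xy) ?(leq_gtF (ltnW xy)).
Qed.

(* An occurrence of 12...k needs k distinct letters. *)
Lemma contains_iota_bound s k M :
  all (fun x => 0 < x <= M) s -> contains s (iota 1 k) -> k <= M.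
Proof.
move=> /allP A /containsP [u su h].
have U := order_iso_uniq h (iota_uniq 1 k).
rewrite -(size_iota 1 k) -(order_iso_size h) -(size_iota 1 M); apply: uniq_leq_size => // x xu.
have /A /andP [x0 xM] := mem_subseq su xu.
by rewrite mem_iota; apply/andP; split; lia.
Qed.

Lemma rgf_cat m s t : rgf_from m (s ++ t) = rgf_from m s && rgf_from (foldl maxn m s) t.
Proof. by elim: s m => [|x s IH] m //=; rewrite IH !andbA. Qed.

Lemma rgf_rcons m s a :
  rgf_from m (rcons s a) = rgf_from m s && (0 < a <= (foldl maxn m s).+1).
Proof. by rewrite -cats1 rgf_cat /= andbT. Qed.

Lemma rgf_range m s : rgf_from m s -> all (fun x => 0 < x <= m + size s) s.
Proof.
elim: s m => [|x s IH] m //= /and3P [x0 xm /IH H]; rewrite x0 /=; apply/andP; split.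
  lia.
by apply: sub_all H => y /andP [-> ym] /=; move: ym; rewrite /maxn; case: ifP; lia.
Qed.

Lemma foldl_maxn_le m s M : m <= M -> all (fun x => x <= M) s -> foldl maxn m s <= M.
Proof.
elim: s m => [|x s IH] m //= mM /andP [xM H].
by apply: IH => //; rewrite geq_max mM xM.
Qed.

Lemma foldl_maxn_id m s : all (fun x => x <= m) s -> foldl maxn m s = m.
Proof. by elim: s => [|x s IH] //= /andP [xm H]; rewrite (maxn_idPl xm) IH. Qed.

Lemma rgf_bounded m d : all (fun x => 0 < x <= m) d -> rgf_from m d.
Proof.
elim: d => [|x d IH] //= /andP [/andP [x0 xm] H]; rewrite x0 (leq_trans xm) //.
by rewrite (maxn_idPl xm) IH.
Qed.

Lemma rgf_iota m j : rgf_from m (iota m.+1 j) /\ foldl maxn m (iota m.+1 j) = m + j.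
Proof.
elim: j m => [|j IH] m /=; first by rewrite addn0.
rewrite (maxn_idPr (leqnSn m)); case: (IH m.+1) => -> ->; split => //; lia.
Qed.

Definition admissible (T : seq (seq nat)) (s : seq nat) : bool :=
  is_rgf s && all (avoids s) T.

Lemma val_pmap_insub n (t : seq nat) : all (fun x => x < n) t ->
  map val (pmap (insub : nat -> option 'I_n) t) = t.
Proof.
elim: t => //= x t IH /andP [xn ht].
by case: insubP => [u _ ux|/negP //]; rewrite /= ux IH.
Qed.

(* Every partition of [n] is the word of some tuple, since its letters lie in [1, n]. *)
Lemma word_of_onto n s : is_rgf s -> size s = n -> exists w : n.-tuple 'I_n, word_of w = s.
Proof.
move=> rs sz; have hr := rgf_range rs; rewrite add0n sz in hr.
pose t := map predn s.
have ht : all (fun x => x < n) t.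
  by rewrite all_map; apply: sub_all hr => x /andP [x0 xn] /=; lia.
have hsz : size (pmap (insub : nat -> option 'I_n) t) == n.
  by rewrite size_pmap_sub; move: ht; rewrite all_count => /eqP ->; rewrite size_map sz.
exists (Tuple hsz); rewrite /word_of /= (map_comp succn val) val_pmap_insub //.
rewrite -map_comp map_id_in // => x xs.
by have /allP /(_ x xs) /andP [x0 _] := hr; apply: prednK.
Qed.

Lemma word_of_inj n : injective (@word_of n).
Proof.
move=> w1 w2 e; apply: val_inj; apply: (inj_map _ e).
by move=> i j [] /val_inj.
Qed.

Lemma p_n_count n T L : uniq L -> {in L, forall s, size s = n} ->
  (forall s, admissible T s -> size s = n -> s \in L) -> p_n n T = count (admissible T) L.
Proof.
move=> uL sL allL; rewrite /p_n cardE -(size_map (@word_of n)) -size_filter.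
apply: perm_size; apply: uniq_perm; rewrite ?filter_uniq ?map_inj_uniq ?enum_uniq //.
  exact: word_of_inj.
move=> s; rewrite mem_filter; apply/mapP/andP => [[w]|[hs sL']].
  rewrite mem_enum inE => hw ->; split => //.
  by apply: allL => //; rewrite size_map size_tuple.
have [w ws] := word_of_onto (proj1 (andP hs)) (sL s sL').
by exists w; rewrite ?mem_enum ?inE ws.
Qed.

Lemma p_n0 T : all (fun t => 0 < size t) T -> p_n 0 T = 1.
Proof.
move=> /allP hT; rewrite (p_n_count (L := [:: [::]])) //=.
- rewrite /= /admissible /is_rgf /=.
  by have -> : all (avoids [::]) T by apply/allP => t /hT; apply: avoids_nil.
- by move=> s; rewrite inE => /eqP ->.
- by move=> s _ /size0nil ->; rewrite inE.
Qed.

Fixpoint bitseqs (n : nat) : seq bitseq :=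
  if n is n'.+1 then map (cons false) (bitseqs n') ++ map (cons true) (bitseqs n')
  else [:: [::]].

Lemma cons_inj (x : bool) : injective (cons x).
Proof. by move=> ? ? []. Qed.

Lemma mem_bitseqs n b : (b \in bitseqs n) = (size b == n).
Proof.
elim: n b => [|n IH] [|x b] //=; rewrite mem_cat.
  by apply/negP; case/orP => /mapP [].
have other (z y : bool) (B : seq bitseq) : z != y -> (z :: b \in map (cons y) B) = false.
  by move=> zy; apply/mapP => -[c _ [e _]]; rewrite e eqxx in zy.
rewrite eqSS -IH; case: x.
  by rewrite (other true false) // mem_map //; apply: cons_inj.
by rewrite (other false true) // mem_map ?orbF //; apply: cons_inj.
Qed.

Lemma bitseqs_uniq n : uniq (bitseqs n).
Proof.
elim: n => [|n IH] //=; rewrite cat_uniq !map_inj_uniq ?IH //=; try exact: cons_inj.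
by rewrite andbT; apply/hasP => -[l /mapP [w _ ->] /mapP [w' _ []]].
Qed.

Lemma count_avoiding_cons n x t :
  count (fun b => ~~ subseq (x :: t) b) (bitseqs n.+1) =
  count (fun b => ~~ subseq t b) (bitseqs n) + count (fun b => ~~ subseq (x :: t) b) (bitseqs n).
Proof.
rewrite /= count_cat !count_map; case: x; [rewrite addnC|]; congr (_ + _);
by apply: eq_count => b /=.
Qed.

Lemma count_avoiding_size n t1 t2 : size t1 = size t2 ->
  count (fun b => ~~ subseq t1 b) (bitseqs n) = count (fun b => ~~ subseq t2 b) (bitseqs n).
Proof.
elim: n t1 t2 => [|n IH] [|x1 t1] [|x2 t2] //= [e].
by rewrite !count_avoiding_cons (IH t1 t2) ?(IH (x1 :: t1) (x2 :: t2)) //= e.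
Qed.

Lemma subseq_nseq_true j b : subseq (nseq j true) b = (j <= count id b).
Proof.
elim: b j => [|x b IH] [|j] //=; rewrite ?sub0seq //.
by case: x; rewrite /= ?IH // add0n -(IH j.+1).
Qed.

Lemma subseq_cat_split (T : eqType) (u s1 s2 : seq T) : subseq u (s1 ++ s2) ->
  exists u1 u2, [/\ u = u1 ++ u2, subseq u1 s1 & subseq u2 s2].
Proof.
case/subseqP => m sm ->; exists (mask (take (size s1) m) s1), (mask (drop (size s1) m) s2).
rewrite -mask_cat ?cat_take_drop ?mask_subseq // size_takel //.
by rewrite sm size_cat leq_addr.
Qed.

(* Words whose letters are positive and whose letters different from 1
   strictly increase; subsequences of 122-avoiding partitions have this shape. *)
Fixpoint ones_incr (u : seq nat) : bool :=
  if u is x :: u' then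
    [&& 0 < x, (x != 1) ==> all (fun y => (y != 1) ==> (x < y)) u' & ones_incr u']
  else true.

Lemma ones_incr_subseq t u : ones_incr t -> subseq u t -> ones_incr u.
Proof.
elim: t u => [|y t IH] [|x u] //= /and3P [y0 hy Wt].
case: eqP => [->|_] h /=; last exact: IH h.
rewrite y0 (IH u) // andbT; apply/implyP => /(implyP hy) /allP H.
by apply/allP => z /(mem_subseq h) /H.
Qed.

Lemma ones_incr_pos u i : ones_incr u -> i < size u -> 0 < nth 0 u i.
Proof. by elim: u i => [|x u IH] [|i] //= /and3P [x0 _ Wu] hi //; apply: IH. Qed.

Lemma ones_incr_lt u i j : ones_incr u -> i < j -> j < size u ->
  nth 0 u i != 1 -> nth 0 u j != 1 -> nth 0 u i < nth 0 u j.
Proof.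
elim: u i j => [|x u IH] [|i] [|j] //= /and3P [x0 hx Wu] ij js n1 n2; last exact: IH.
by move: hx; rewrite n1 => /allP /(_ (nth 0 u j)); rewrite mem_nth // n2; apply.
Qed.

Lemma ones_incr_cmp u i j : ones_incr u -> i < size u -> j < size u ->
  (nth 0 u i < nth 0 u j) = (nth 0 u j != 1) && ((nth 0 u i != 1) ==> (i < j)) /\
  (nth 0 u i == nth 0 u j) = (i == j) || (nth 0 u i == 1) && (nth 0 u j == 1).
Proof.
move=> Wu hi hj; have := ones_incr_pos Wu hi; have := ones_incr_pos Wu hj.
case: (ltngtP i j) => [ij|ji|<-] pj pi.
- by have := ones_incr_lt Wu ij hj; lia.
- by have := ones_incr_lt Wu ji hi; lia.
- by rewrite ltnn eqxx; lia.
Qed.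

Lemma ones_incr_order_iso u v : ones_incr u -> ones_incr v ->
  map (fun x => x != 1) u = map (fun x => x != 1) v -> order_iso u v.
Proof.
move=> Wu Wv e; have hs : size u = size v by rewrite -(size_map (fun x => x != 1) u) e size_map.
have same_ones k : k < size u -> (nth 0 u k == 1) = (nth 0 v k == 1).
  move=> hk; apply: negb_inj.
  by rewrite -!(nth_map 0 true (fun x => x != 1)) -?hs // e.
apply/order_isoP; split => // i j hi hj.
have [-> ->] := ones_incr_cmp Wu hi hj.
have [hi' hj'] : i < size v /\ j < size v by rewrite -hs.
have [-> ->] := ones_incr_cmp Wv hi' hj'.
by rewrite !same_ones.
Qed.

Fixpoint ones_or_new (m : nat) (b : bitseq) : seq nat :=
  if b is x :: b' then
    if x then m.+1 :: ones_or_new m.+1 b' else 1 :: ones_or_new m b'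
  else [::].

(* The partition of [n+1] that avoids 122, coded by b of size n. *)
Definition rgf122 (b : bitseq) : seq nat := 1 :: ones_or_new 1 b.

Lemma size_ones_or_new m b : size (ones_or_new m b) = size b.
Proof. by elim: b m => [|[] b IH] m //=; rewrite IH. Qed.

Lemma ones_or_new_ones m b : 0 < m -> map (fun x => x != 1) (ones_or_new m b) = b.
Proof. by elim: b m => [|[] b IH] m m0 //=; rewrite IH // eqSS -lt0n m0. Qed.

Lemma ones_or_new_range m b : 0 < m ->
  all (fun x => 0 < x <= m + count id b) (ones_or_new m b).
Proof.
elim: b m => [|[] b IH] m m0 //=; apply/andP; split; try lia.
  by rewrite add1n addnS -addSn; apply: IH.
exact: IH.
Qed.

Lemma ones_or_new_incr m b : 0 < m ->
  ones_incr (ones_or_new m b) && all (fun y => (y != 1) ==> (m < y)) (ones_or_new m b).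
Proof.
elim: b m => [|[] b IH] m m0 //=; last by have /andP [-> ->] := IH m m0.
have /andP [-> h] := IH m.+1 isT; rewrite h /= !implybT andbT.
rewrite ltnSn implybT /=; apply: sub_all h => y /implyP hy; apply/implyP => /hy; lia.
Qed.

Lemma rgf_ones_or_new m b : 0 < m -> rgf_from m (ones_or_new m b).
Proof.
elim: b m => [|[] b IH] m m0 //=.
  by rewrite ltnSn (maxn_idPr (leqnSn m)); apply: IH.
by rewrite (maxn_idPl m0); apply: IH.
Qed.

Lemma ones_or_new_rcons m b x :
  ones_or_new m (rcons b x) = rcons (ones_or_new m b) (if x then (m + count id b).+1 else 1).
Proof.
elim: b m => [|[] b IH] m /=; first by case: x; rewrite ?addn0.
  by rewrite IH add1n addnS addSn.
by rewrite IH add0n.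
Qed.

Lemma ones_or_new_mem m b a : 0 < m -> m < a <= m + count id b -> a \in ones_or_new m b.
Proof.
elim: b m => [|[] b IH] m m0 /=; first lia.
  by rewrite inE; case: eqP => //= ne h; apply: IH => //; lia.
by rewrite add0n inE => h; rewrite (IH m) ?orbT.
Qed.

Lemma ones_or_new_nseq m j : ones_or_new m (nseq j true) = iota m.+1 j.
Proof. by elim: j m => [|j IH] m //=; rewrite IH. Qed.

Lemma rgf122_inj : injective rgf122.
Proof. by move=> b1 b2 [] e; rewrite -(ones_or_new_ones b1 (ltn0Sn 0)) e ones_or_new_ones. Qed.

Lemma size_rgf122 b : size (rgf122 b) = (size b).+1.
Proof. by rewrite /= size_ones_or_new. Qed.

Lemma rgf122_range b : all (fun x => 0 < x <= 1 + count id b) (rgf122 b).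
Proof. by apply/andP; split; [lia | apply: ones_or_new_range]. Qed.

Lemma rgf122_incr b : ones_incr (rgf122 b).
Proof. by have /andP [h _] := ones_or_new_incr b (ltn0Sn 0); rewrite /= h. Qed.

Lemma rgf122_is_rgf b : is_rgf (rgf122 b).
Proof. exact: rgf_ones_or_new. Qed.

Lemma rgf122_avoids b : avoids (rgf122 b) [:: 1; 2; 2].
Proof.
apply/negP => /containsP [u su /order_iso_122 [x [y [ue xy]]]].
have := ones_incr_subseq (rgf122_incr b) su; rewrite ue /= => /and3P [x0 _ /and3P [_ hy _]].
by move: hy; rewrite ltnn; case: eqP => //=; lia.
Qed.

(* Conversely, every nonempty 122-avoiding partition is some rgf122 b: a new
   letter that is neither 1 nor a new maximum a would create 1 a a. *)
Lemma rgf122_onto s : is_rgf s -> avoids s [:: 1; 2; 2] -> s = [::] \/ exists b, s = rgf122 b.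
Proof.
elim/last_ind: s => [|s a IH]; first by left.
rewrite /is_rgf rgf_rcons => /andP [rs /andP [a0 am]] av; right.
case: (IH rs (avoids_rcons av)) => [es|[b eb]]; subst s.
  by exists [::]; have -> : a = 1 by move: am => /=; lia.
have top : foldl maxn 0 (rgf122 b) <= 1 + count id b.
  by apply: foldl_maxn_le => //; apply: sub_all (rgf122_range b) => x /andP [].
case: (a =P 1) => [->|a1].
  by exists (rcons b false); rewrite /rgf122 ones_or_new_rcons.
case: (a =P (count id b).+2) => [->|a2].
  by exists (rcons b true); rewrite /rgf122 ones_or_new_rcons add1n.
have ma : a \in ones_or_new 1 b by apply: ones_or_new_mem => //; lia.
case/negP: av; apply/containsP; exists [:: 1; a; a].
  by rewrite -cats1 /= -[[:: a; a]]/([:: a] ++ [:: a]) cat_subseq // sub1seq.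
by apply/order_iso_122; exists 1, a; split => //; lia.
Qed.

(* Occurrences of rgf122 c in rgf122 b: when c has a false, an occurrence must
   start with a repeated letter, hence with 1, and then its 1-pattern is that
   of rgf122 c; otherwise rgf122 c = 12...(size c + 1). *)
Lemma contains_rgf122 b c : contains (rgf122 b) (rgf122 c) = subseq c b.
Proof.
apply/idP/idP => [/containsP [u su h]|/subseqP [m sm ->]]; last first.
  apply/containsP; exists (mask (true :: m) (rgf122 b)); first exact: mask_subseq.
  apply: ones_incr_order_iso; rewrite ?rgf122_incr //.
    exact: ones_incr_subseq (rgf122_incr b) (mask_subseq _ _).
  by rewrite map_mask /= !ones_or_new_ones.
have Wu := ones_incr_subseq (rgf122_incr b) su.
have hs := order_iso_size h; rewrite size_rgf122 in hs.
case: (boolP (false \in c)) => [fc|nf]; last first.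
  have ec : c = nseq (size c) true by apply/all_pred1P/allP => -[] // /(negP nf).
  rewrite ec subseq_nseq_true; move: h; rewrite ec /rgf122 ones_or_new_nseq => h.
  have : contains (rgf122 b) (iota 1 (size c).+1) by apply/containsP; exists u.
  by move/(contains_iota_bound (rgf122_range b)); rewrite size_nseq; lia.
pose j := (index false c).+1.
have jl : j < size u by rewrite hs ltnS index_mem.
have tj : nth 0 (rgf122 c) j = 1.
  apply/eqP/negPn; rewrite /= -(nth_map 0 true (fun x => x != 1)) ?size_ones_or_new ?index_mem //.
  by rewrite ones_or_new_ones // nth_index.
have u0 : nth 0 u 0 = 1.
  case/order_isoP: h => _ /(_ 0 j (leq_ltn_trans (leq0n _) jl) jl) [_].
  rewrite tj eqxx; have [_ ->] := ones_incr_cmp Wu (leq_ltn_trans (leq0n _) jl) jl.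
  by case/andP => /eqP.
have := map_subseq (fun x => x != 1) su.
by rewrite -{1}u0 (order_iso_level h) ?hs //= ones_or_new_ones // ones_or_new_ones.
Qed.

Lemma p_n_122 n c :
  p_n n.+1 [:: [:: 1; 2; 2]; rgf122 c] = count (fun b => ~~ subseq c b) (bitseqs n).
Proof.
rewrite (p_n_count (L := map rgf122 (bitseqs n))).
- rewrite count_map; apply: eq_count => b.
  by rewrite /admissible /= rgf122_is_rgf rgf122_avoids /avoids contains_rgf122 andbT.
- by rewrite map_inj_uniq ?bitseqs_uniq //; apply: rgf122_inj.
- by move=> s /mapP [b bb ->]; rewrite size_rgf122; move: bb; rewrite mem_bitseqs => /eqP ->.
- move=> s /andP [rs /andP [av _]] ss.
  case: (rgf122_onto rs av) => [es|[b eb]]; first by rewrite es in ss.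
  by rewrite eb map_f // mem_bitseqs; rewrite eb size_rgf122 in ss; case: ss => ->.
Qed.

Lemma geq_transitive : transitive geq.
Proof. by move=> y x z /= h1 h2; apply: leq_trans h2 h1. Qed.

Lemma sorted_rcons_rcons (T : Type) (r : rel T) s x y :
  sorted r (rcons (rcons s x) y) = sorted r (rcons s x) && r x y.
Proof. by case: s => [|z s] /=; rewrite ?andbT // rcons_path last_rcons. Qed.

(* 12...M followed by a nonincreasing word avoids 112: a repeated letter
   x x must lie in the nonincreasing part, and so would a larger letter after it. *)
Lemma avoids112_iota_sorted M d : sorted geq d -> avoids (iota 1 M ++ d) [:: 1; 1; 2].
Proof.
move=> sd; apply/negP => /containsP [u su /order_iso_112 [x [y [ue xy]]]]; subst u.
have [u1 [u2 [e h1 h2]]] := subseq_cat_split su.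
have U1 := subseq_uniq h1 (iota_uniq 1 M).
have S2 := subseq_sorted geq_transitive h2 sd.
move: e U1 S2; case: u1 {h1 h2 su} => [|a [|b [|c [|? ?]]]] //=.
- by move=> <- _ /and3P [_ h _]; lia.
- by case=> _ <- _ /andP [h _]; lia.
- by case=> <- <- _; rewrite inE eqxx.
- by case=> <- <- _; rewrite !inE eqxx.
Qed.

(* A 112-avoiding partition is 12...M followed by a nonincreasing word with
   letters in [1, M]: a letter repeated before a larger one would give 112. *)
Lemma avoids112_shape s : is_rgf s -> avoids s [:: 1; 1; 2] ->
  exists M d, [/\ s = iota 1 M ++ d, sorted geq d & all (fun x => 0 < x <= M) d].
Proof.
elim/last_ind: s => [|s a IH]; first by exists 0, [::].
rewrite /is_rgf rgf_rcons => /andP [rs /andP [a0 am]] av.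
have [M [d [es sd hd]]] := IH rs (avoids_rcons av); subst s.
have aM : a <= M.+1.
  apply: leq_trans am _; rewrite ltnS; apply: foldl_maxn_le => //.
  rewrite all_cat; apply/andP; split; first by apply/allP => x; rewrite mem_iota; lia.
  by apply: sub_all hd => x /andP [].
case/lastP: d sd hd av {rs am IH} => [|d e] sd hd av.
  case: (a =P M.+1) => [->|aM1].
    by exists M.+1, [::]; rewrite !cats0 -cats1 -[M.+1 in RHS]addn1 iotaD add1n.
  by exists M, [:: a]; rewrite cats0 cats1 /= andbT; split => //; lia.
have [e0 eM] : 0 < e /\ e <= M by move: hd; rewrite all_rcons => /andP [/andP [] ].
case: (leqP a e) => [ae|ea].
  exists M, (rcons (rcons d e) a); rewrite rcons_cat; split => //.
    by rewrite sorted_rcons_rcons sd /= ae.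
  by rewrite all_rcons hd andbT; lia.
case/negP: av; apply/containsP; exists [:: e; e; a]; first last.
  by apply/order_iso_112; exists e, a.
rewrite -!cats1 -catA -[[:: e; e; a]]/([:: e] ++ ([:: e] ++ [:: a])).
apply: cat_subseq; first by rewrite sub1seq mem_iota; lia.
by apply: cat_subseq => //; rewrite sub1seq mem_cat mem_head orbT.
Qed.

Fixpoint staircase (L : nat) (b : bitseq) : seq nat :=
  if b is x :: b' then
    if x then staircase L.-1 b' else L :: staircase L b'
  else [::].

(* The partition of [n+1] that avoids 112, coded by b of size n: 12...M where
   M - 1 is the number of trues of b, followed by the staircase from M. *)
Definition rgf112 (b : bitseq) : seq nat :=
  iota 1 (count id b).+1 ++ staircase (count id b).+1 b.

(* Inverse of the staircase: walk down from level L to each letter of d,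
   writing false at each letter, and finally walk down to level 1. *)
Fixpoint staircase_code (L : nat) (d : seq nat) : bitseq :=
  if d is x :: d' then nseq (L - x) true ++ false :: staircase_code x d'
  else nseq L.-1 true.

Lemma staircase_le L b : all (fun x => x <= L) (staircase L b).
Proof.
elim: b L => [|[] b IH] L //=; last by rewrite leqnn IH.
by apply: sub_all (IH L.-1) => x /= h; apply: leq_trans h (leq_pred L).
Qed.

Lemma staircase_range L b : count id b < L -> all (fun x => 0 < x <= L) (staircase L b).
Proof.
elim: b L => [|[] b IH] L //= h; last by rewrite leqnn andbT IH //; lia.
apply: sub_all (IH L.-1 _) => [x /= /andP [-> h2]|]; last lia.
exact: leq_trans h2 (leq_pred L).
Qed.

Lemma staircase_sorted L b : sorted geq (staircase L b).
Proof.
elim: b L => [|[] b IH] L //=.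
by rewrite (path_sortedE geq_transitive) IH andbT; apply: staircase_le.
Qed.

Lemma size_staircase L b : size (staircase L b) + count id b = size b.
Proof.
elim: b L => [|[] b IH] L //=; first by rewrite add1n addnS IH.
by rewrite add0n addSn IH.
Qed.

Lemma staircase_nseq L j b : staircase L (nseq j true ++ b) = staircase (L - j) b.
Proof. by elim: j L => [|j IH] L /=; rewrite ?subn0 // IH; congr staircase; lia. Qed.

Lemma sorted_geq_tail L x d : sorted geq (x :: d) -> all (fun y => 0 < y <= L) (x :: d) ->
  sorted geq d /\ all (fun y => 0 < y <= x) d.
Proof.
move=> sd /andP [_ hd]; split; first exact: path_sorted sd.
have /allP hx := order_path_min geq_transitive sd.
by apply/allP => y yd; have /allP /(_ y yd) /andP [-> _] := hd; apply: hx.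
Qed.

Lemma count_staircase_code L d : sorted geq d -> all (fun x => 0 < x <= L) d ->
  count id (staircase_code L d) = L.-1.
Proof.
elim: d L => [|x d IH] L /= sd hd; first by rewrite count_nseq mul1n.
have [sd' hd'] := sorted_geq_tail sd hd; move: hd => /andP [/andP [x0 xL] _].
by rewrite count_cat count_nseq mul1n /= add0n IH //; lia.
Qed.

Lemma staircase_codeK L d : sorted geq d -> all (fun x => 0 < x <= L) d ->
  staircase L (staircase_code L d) = d.
Proof.
elim: d L => [|x d IH] L /= sd hd; first by rewrite -[nseq _ _]cats0 staircase_nseq.
have [sd' hd'] := sorted_geq_tail sd hd; move: hd => /andP [/andP [x0 xL] _].
by rewrite staircase_nseq /= subKn // IH.
Qed.

Lemma staircase_code_down L d : 1 < L -> all (fun x => x <= L.-1) d ->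
  staircase_code L d = true :: staircase_code L.-1 d.
Proof.
case: L => [|[|L]] // _; case: d => [|x d] //= /andP [xL _].
by rewrite subSn.
Qed.

Lemma staircaseK L b : 0 < L -> count id b = L.-1 -> staircase_code L (staircase L b) = b.
Proof.
elim: b L => [|[] b IH] L /= L0; first by move=> <-.
  rewrite add1n => h; have L1 : 1 < L by lia.
  by rewrite staircase_code_down ?staircase_le // IH //; lia.
by rewrite add0n subnn => h; rewrite IH.
Qed.

Lemma size_rgf112 b : size (rgf112 b) = (size b).+1.
Proof. by rewrite size_cat size_iota -(size_staircase (count id b).+1 b) addSn addnC. Qed.

Lemma rgf112_range b : all (fun x => 0 < x <= (count id b).+1) (rgf112 b).
Proof. by rewrite all_cat staircase_range // andbT; apply/allP => x; rewrite mem_iota; lia. Qed.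

Lemma rgf112_is_rgf b : is_rgf (rgf112 b).
Proof.
rewrite /is_rgf /rgf112 rgf_cat; case: (rgf_iota 0 (count id b).+1) => -> ->.
by rewrite add0n; apply: rgf_bounded; apply: staircase_range.
Qed.

Lemma rgf112_avoids b : avoids (rgf112 b) [:: 1; 1; 2].
Proof. exact: avoids112_iota_sorted (staircase_sorted _ _). Qed.

Lemma contains_iota_rgf112 b k : contains (rgf112 b) (iota 1 k) = (k <= (count id b).+1).
Proof.
apply/idP/idP; first exact: contains_iota_bound (rgf112_range b).
move=> kc; apply/containsP; exists (iota 1 k); last exact: order_iso_refl.
apply: subseq_trans (prefix_subseq _ _).
by rewrite -(subnKC kc) iotaD prefix_subseq.
Qed.

(* b is recovered from rgf112 b: the maximum M gives the staircase level and
   the staircase starts after the prefix 12...M. *)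
Lemma rgf112_inj : injective rgf112.
Proof.
pose decode s := staircase_code (foldl maxn 0 s) (drop (foldl maxn 0 s) s).
apply: (can_inj (g := decode)) => b; rewrite /decode /rgf112 foldl_cat.
case: (rgf_iota 0 (count id b).+1) => _ ->; rewrite add0n foldl_maxn_id ?staircase_le //.
by rewrite drop_size_cat ?size_iota // staircaseK.
Qed.

Lemma rgf112_code M d : 0 < M -> sorted geq d -> all (fun x => 0 < x <= M) d ->
  rgf112 (staircase_code M d) = iota 1 M ++ d.
Proof.
by move=> M0 sd hd; rewrite /rgf112 count_staircase_code // prednK // staircase_codeK.
Qed.

Lemma rgf112_onto s : is_rgf s -> avoids s [:: 1; 1; 2] -> s = [::] \/ exists b, s = rgf112 b.
Proof.
move=> rs av; have [[|M] [d [-> sd hd]]] := avoids112_shape rs av.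
  by left; case: d hd {sd} => [|x d] //= /andP [/andP []]; lia.
by right; exists (staircase_code M.+1 d); rewrite rgf112_code.
Qed.

Lemma p_n_112 n k : p_n n.+1 [:: [:: 1; 1; 2]; incr_pat k.+1] =
  count (fun b => ~~ subseq (nseq k true) b) (bitseqs n).
Proof.
rewrite (p_n_count (L := map rgf112 (bitseqs n))).
- rewrite count_map; apply: eq_count => b.
  rewrite /admissible /= rgf112_is_rgf rgf112_avoids /avoids /incr_pat.
  by rewrite contains_iota_rgf112 subseq_nseq_true andbT.
- by rewrite map_inj_uniq ?bitseqs_uniq //; apply: rgf112_inj.
- by move=> s /mapP [b bb ->]; rewrite size_rgf112; move: bb; rewrite mem_bitseqs => /eqP ->.
- move=> s /andP [rs /andP [av _]] ss.
  case: (rgf112_onto rs av) => [es|[b eb]]; first by rewrite es in ss.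
  by rewrite eb map_f // mem_bitseqs; rewrite eb size_rgf112 in ss; case: ss => ->.
Qed.

Theorem corollary2p14 (k : nat) (tau : seq nat) :
  1 <= k -> size tau = k -> is_rgf tau -> avoids tau [:: 1; 2; 2] ->
  forall n : nat,
    p_n n [:: [:: 1; 2; 2]; tau] = p_n n [:: [:: 1; 1; 2]; incr_pat k].
Proof.
move=> k1 stau rt atau [|n].
  by rewrite !p_n0 //= ?stau ?size_iota andbT.
have [et|[c et]] := rgf122_onto rt atau; first by rewrite -stau et in k1.
have sc : size c = k.-1 by rewrite -stau et size_rgf122.
rewrite et p_n_122 -(prednK k1) p_n_112.
by apply: count_avoiding_size; rewrite size_nseq.
Qed.
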